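(* Consider metrics on the four-sphere of the form $$ds^2=dr^2+\frac{f(r)^2}{4}(d\theta^2+\sin^2\theta\,d\phi^2)+\frac{g(r)^2}{4}(d\psi+\cos\theta\,d\phi)^2,$$ $0\le r\le\pi$, $0\le\theta\le\pi$, $0\le\phi\le 2\pi$, $0\le\psi\le4\pi$, with $f,g$ smooth, and the system of ordinary differential equations $$\frac{f''}{f}=\frac{f'g'}{fg}-\frac{g^2}{f^4},\qquad \frac{g''}{g}=\frac{f'^2-4}{f^2}+\frac{3g^2}{f^4},$$ which is satisfied by the round four-sphere $f(r)=g(r)=\sin r$ and whose solutions give Einstein metrics of this form. Substitute $f(r)=\sin r+\epsilon p(r)$, $g(r)=\sin r+\epsilon q(r)$ and keep terms of first order in $\epsilon$, obtaining the linearized system $$p''-q=(p'+q')\cot r+\frac{3}{\sin^2 r}(p-q),\qquad q''+q-2p=2p'\cot r-\frac{6}{\sin^2 r}(p-q).$$ Then the pairs $(p,q)$ of smooth (in particular finite) real functions on $[0,\pi]$ solving this linearized system are exactly $$p(r)=q(r)=c_1\cos r+c_2(\sin r-r\cos r),\qquad c_1,c_2\in\mathbb{R}.$$ Moreover, for every such solution, the metric with $f=g=\sin r+\epsilon p$ has Riemann curvature tensor (in the orthonormal frame $e^1=\tfrac f2 d\theta$, $e^2=\tfrac f2\sin\theta\,d\phi$, $e^3=\tfrac g2(d\psi+\cos\theta\,d\phi)$, $e^4=dr$) $$R_{abcd}=(1-2\epsilon c_2)(\delta_{ac}\delta_{bd}-\delta_{ad}\delta_{bc})+O(\epsilon^2),$$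 i.e. to first order in $\epsilon$ it is a conformally flat Einstein metric of constant sectional curvature $1-2\epsilon c_2$, so the deformation changes at most the size of the sphere.
   Context: An Einstein metric is one whose Ricci tensor is a constant multiple of the metric. The round unit four-sphere corresponds to $f=g=\sin r$ and has constant sectional curvature $1$. *)

From HB Require Import structures.
From mathcomp Require Import all_boot all_order all_algebra.
From mathcomp Require Import all_classical all_reals all_analysis.
Set Implicit Arguments. Unset Strict Implicit. Unset Printing Implicit Defensive.
Import Order.TTheory GRing.Theory Num.Theory.
Import numFieldNormedType.Exports.
Local Open Scope ring_scope.

Definition i_theta : 'I_4 := @Ordinal 4 0 isT.
Definition i_phi : 'I_4 := @Ordinal 4 1 isT.
Definition i_psi : 'I_4 := @Ordinal 4 2 isT.
Definition i_r : 'I_4 := @Ordinal 4 3 isT.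

Section Defs.
Variable R : realType.

Definition smooth (f : R -> R) : Prop :=
  forall (n : nat) (x : R), derivable (derive1n n f) x 1.

Definition cot (r : R) : R := cos r / sin r.

Definition linearized_system (p q : R -> R) (r : R) : Prop :=
  derive1n 2 p r - q r
    = (derive1 p r + derive1 q r) * cot r + 3 / (sin r ^+ 2) * (p r - q r)
  /\ derive1n 2 q r + q r - 2 * p r
    = 2 * derive1 p r * cot r - 6 / (sin r ^+ 2) * (p r - q r).

Definition sol (c1 c2 : R) (r : R) : R := c1 * cos r + c2 * (sin r - r * cos r).

(* A point of the chart is a row vector x : 'rV[R]_4; coordinates are
   x 0 0 = theta, x 0 1 = phi, x 0 2 = psi, x 0 3 = r.                    *)
Definition chart_coord (x : 'rV[R]_4) (i : 'I_4) : R := x ord0 i.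

Definition pd (F : 'rV[R]_4 -> R) (i : 'I_4) (x : 'rV[R]_4) : R :=
  'D_(delta_mx ord0 i) F x.

(* A metric is given by a coframe Th : row a of Th x gives the components
   e^a = sum_i Th x a i dx^i of an orthonormal coframe.
   Metric g_ij = sum_a Th a i Th a j, i.e. G = Th^T Th. *)
Definition metric (Th : 'rV[R]_4 -> 'M[R]_4) (x : 'rV[R]_4) : 'M[R]_4 :=
  (Th x)^T *m Th x.

Definition metric_inv (Th : 'rV[R]_4 -> 'M[R]_4) (x : 'rV[R]_4) : 'M[R]_4 :=
  invmx (metric Th x).

Definition christoffel (Th : 'rV[R]_4 -> 'M[R]_4) (k i j : 'I_4)
    (x : 'rV[R]_4) : R :=
  2^-1 * \sum_(l < 4) metric_inv Th x k l *
    (pd (fun y => metric Th y j l) i x + pd (fun y => metric Th y i l) j x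
     - pd (fun y => metric Th y i j) l x).

(* R^m_{ijl}:  R(d_i, d_j) d_l = sum_m R^m_{ijl} d_m,
   with R(X,Y)Z = nabla_X nabla_Y Z - nabla_Y nabla_X Z - nabla_[X,Y] Z. *)
Definition riemann_up (Th : 'rV[R]_4 -> 'M[R]_4) (m i j l : 'I_4)
    (x : 'rV[R]_4) : R :=
  pd (christoffel Th m j l) i x - pd (christoffel Th m i l) j x
  + \sum_(n < 4) (christoffel Th m i n x * christoffel Th n j l x
                  - christoffel Th m j n x * christoffel Th n i l x).

(* R_{ijkl} = g(R(d_i, d_j) d_l, d_k), so that R_{ijij} is the sectional
   curvature numerator (round unit sphere: R_{abcd} = d_ac d_bd - d_ad d_bc
   in an orthonormal frame). *)
Definition riemann_down (Th : 'rV[R]_4 -> 'M[R]_4) (i j k l : 'I_4)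
    (x : 'rV[R]_4) : R :=
  \sum_(m < 4) metric Th x k m * riemann_up Th m i j l x.

(* The orthonormal frame (E_a) dual to the coframe (e^a): the matrix
   E = Th^{-1}, E_a = sum_i E i a d_i. *)
Definition frame (Th : 'rV[R]_4 -> 'M[R]_4) (x : 'rV[R]_4) : 'M[R]_4 :=
  invmx (Th x).

Definition riemann_frame (Th : 'rV[R]_4 -> 'M[R]_4) (a b c d : 'I_4)
    (x : 'rV[R]_4) : R :=
  \sum_(i < 4) \sum_(j < 4) \sum_(k < 4) \sum_(l < 4)
    frame Th x i a * frame Th x j b * frame Th x k c * frame Th x l d
    * riemann_down Th i j k l x.

(* The coframe of the metric
   ds^2 = dr^2 + f^2/4 (dtheta^2 + sin^2 theta dphi^2) + g^2/4 (dpsi + cos theta dphi)^2: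
   e^1 = f/2 dtheta, e^2 = f/2 sin theta dphi,
   e^3 = g/2 (dpsi + cos theta dphi), e^4 = dr
   (frame index a+1 corresponds to row a). *)
Definition bianchi_coframe (f g : R -> R) (x : 'rV[R]_4) : 'M[R]_4 :=
  let th := chart_coord x i_theta in
  let r := chart_coord x i_r in
  \matrix_(a < 4, i < 4)
    (if (a == 0 :> nat) && (i == 0 :> nat) then f r / 2
     else if (a == 1 :> nat) && (i == 1 :> nat) then f r / 2 * sin th
     else if (a == 2 :> nat) && (i == 1 :> nat) then g r / 2 * cos th
     else if (a == 2 :> nat) && (i == 2 :> nat) then g r / 2
     else if (a == 3 :> nat) && (i == 3 :> nat) then 1
     else 0).

End Defs.

From HB Require Import structures.
From mathcomp Require Import all_boot all_order all_algebra.
From mathcomp Require Import all_classical all_reals all_analysis.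
From mathcomp Require Import ring lra.
Import Order.TTheory GRing.Theory Num.Theory.
Import numFieldNormedType.Exports.

Set Implicit Arguments. Unset Strict Implicit. Unset Printing Implicit Defensive.
Local Open Scope ring_scope.

(* For f = g = F the metric is the warped product dr^2 + F(r)^2 g_(S^3): the
   bracket in ds^2 is the round metric of S^3 in Hopf coordinates.  Its
   curvature in the orthonormal frame is therefore determined by two sectional
   curvatures, (1 - F'^2) / F^2 on planes tangent to the spheres r = const and
   - F'' / F on planes containing d_r.  For F = sin r + eps (c1 cos r +
   c2 (sin r - r cos r)) both equal 1 - 2 eps c2 up to O(eps^2), because
   cos r * sol' + sin r * sol = c2 sin^2 r.

   For the linearized system, u = p - q solves
   sin^2 u'' + sin cos u' + (2 sin^2 - 9) u = 0 on ]0, pi[.  Continuity at the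
   endpoints, where sin vanishes, forces u(0) = u(pi) = 0, and at a positive
   interior maximum the equation would give u'' > 0; so u = 0.  Then
   p'' = p + 2 p' cot r, whose solutions are spanned by cos r and
   sin r - r cos r; the coefficients of p in this basis, obtained by Cramer's
   rule, have zero derivative. *)

Section FourfoldSums.
Variables (R : comPzRingType) (I : finType).
Implicit Types f g : I -> I -> I -> I -> R.

Definition sum4 f : R := \sum_i \sum_j \sum_k \sum_l f i j k l.

Lemma sum4D f g : sum4 (fun i j k l => f i j k l + g i j k l) = sum4 f + sum4 g.
Proof.
rewrite /sum4 -big_split; apply: eq_bigr => i _; rewrite -big_split.
apply: eq_bigr => j _; rewrite -big_split; apply: eq_bigr => k _; exact: big_split.
Qed.

Lemma sum4B f g : sum4 (fun i j k l => f i j k l - g i j k l) = sum4 f - sum4 g.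
Proof.
rewrite /sum4 -sumrB; apply: eq_bigr => i _; rewrite -sumrB.
apply: eq_bigr => j _; rewrite -sumrB; apply: eq_bigr => k _; exact: sumrB.
Qed.

Lemma sum4N f : sum4 (fun i j k l => - f i j k l) = - sum4 f.
Proof.
rewrite /sum4 -sumrN; apply: eq_bigr => i _; rewrite -sumrN.
apply: eq_bigr => j _; rewrite -sumrN; apply: eq_bigr => k _; exact: sumrN.
Qed.

Lemma sum4Z (a : R) f : sum4 (fun i j k l => a * f i j k l) = a * sum4 f.
Proof.
rewrite /sum4 mulr_sumr; apply: eq_bigr => i _; rewrite mulr_sumr.
apply: eq_bigr => j _; rewrite mulr_sumr; apply: eq_bigr => k _; by rewrite mulr_sumr.
Qed.

Lemma sum4_mul_ik_jl (P Q : I -> I -> R) :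
  sum4 (fun i j k l => P i k * Q j l) = (\sum_i \sum_k P i k) * (\sum_j \sum_l Q j l).
Proof.
rewrite /sum4 big_distrl; apply: eq_bigr => i _.
rewrite big_distrl exchange_big; apply: eq_bigr => k _.
rewrite big_distrr; apply: eq_bigr => j _; by rewrite big_distrr.
Qed.

Lemma sum4_mul_il_jk (P Q : I -> I -> R) :
  sum4 (fun i j k l => P i l * Q j k) = (\sum_i \sum_k P i k) * (\sum_j \sum_l Q j l).
Proof.
rewrite -sum4_mul_ik_jl /sum4; apply: eq_bigr => i _; apply: eq_bigr => j _.
exact: exchange_big.
Qed.

End FourfoldSums.

Section RealDerivatives.
Variable R : realType.
Implicit Types f : R -> R.

Lemma is_derive1_continuous f (a df : R) : is_derive a 1 f df -> {for a, continuous f}.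
Proof. by case=> Hf _; apply/differentiable_continuous/derivable1_diffP. Qed.

Lemma smooth_is_derive f n (a : R) : smooth f ->
  is_derive a 1 (derive1n n f) (derive1n n.+1 f a).
Proof. by move=> Hf; rewrite derive1nS derive1E; apply: derivableP; exact: Hf. Qed.

End RealDerivatives.

(* The [is_derive] instances of the library state derivatives with [*:]. *)
Ltac derive1_field := rewrite derive1E derive_val /GRing.scale /=; field.

Section ChartDerivatives.
Variable R : realType.

Lemma pd_theta_r (h : R -> R -> R) (x : 'rV[R]_4) (i : 'I_4) :
  pd (fun y => h (chart_coord y i_theta) (chart_coord y i_r)) i x =
  if i == i_theta then derive1 (fun z => h z (chart_coord x i_r)) (chart_coord x i_theta)
  else if i == i_r then derive1 (h (chart_coord x i_theta)) (chart_coord x i_r) else 0.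
Proof.
rewrite /pd /derive /derive1 /chart_coord.
have shiftE j k t : (t *: delta_mx ord0 j + x) ord0 k = (if j == k then t else 0) + x ord0 k.
  by rewrite !mxE eqxx /= eq_sym; case: eqP => _; rewrite ?mulr1 ?mulr0.
case: ifP => [/eqP->|ith].
  rewrite (_ : (fun _ => _) = fun t => t^-1 *: (h (t + x ord0 i_theta) (x ord0 i_r)
                                                - h (x ord0 i_theta) (x ord0 i_r))) //.
  by apply: funext => t /=; rewrite /shift /= !shiftE /= add0r.
case: ifP => [/eqP->|ir].
  rewrite (_ : (fun _ => _) = fun t => t^-1 *: (h (x ord0 i_theta) (t + x ord0 i_r)
                                                - h (x ord0 i_theta) (x ord0 i_r))) //.
  by apply: funext => t /=; rewrite /shift /= !shiftE /= add0r.
rewrite (_ : (fun _ => _) = fun _ => 0); last first.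
  by apply: funext => t /=; rewrite /shift /= !shiftE ith ir !add0r subrr scaler0.
exact: lim_cst.
Qed.

End ChartDerivatives.

Section RealIntervals.
Variable R : realType.
Local Open Scope classical_set_scope.
Implicit Types f g h v : R -> R.

Lemma derive1_eq_itvoo f g (a b z : R) : a < z < b ->
  (forall y, a < y < b -> f y = g y) -> derive1 f z = derive1 g z.
Proof.
move=> zI fg; rewrite !derive1E; apply: near_eq_derive.
have : z \in `]a, b[%R by rewrite in_itv.
move/(near_in_itvoo (a := a) (b := b)).
by apply: filterS => y; rewrite in_itv /=; apply: fg.
Qed.

Lemma is_derive0_itvoo_const f (a b : R) : (forall z, a < z < b -> is_derive z 1 f 0) ->
  forall z w, a < z < b -> a < w < b -> f z = f w.
Proof.
move=> df z w zI wI.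
wlog zw : z w zI wI / z <= w.
  by move=> W; case: (leP z w) => [|/ltW] ?; [exact: W | apply/esym/W].
have inI y : z <= y <= w -> a < y < b.
  by case/andP: zI => az _; case/andP: wI => _ wb /andP[zy yw]; apply/andP; split; lra.
have cf : {within `[z, w], continuous f}.
  apply: continuous_in_subspaceT => y; rewrite inE /= in_itv /= => yI.
  exact: is_derive1_continuous (df y (inI y yI)).
have df0 y : y \in `]z, w[%R -> is_derive y 1 f ((fun _ => 0) y).
  by rewrite in_itv /= => /andP[zy yw]; apply/df/inI; rewrite !ltW.
have [c _ E] := MVT_segment zw df0 cf.
by apply/eqP; rewrite eq_sym -subr_eq0 E mul0r.
Qed.

Lemma itvcc_zero_of_itvoo h (a b : R) : a < b -> continuous h ->
  (forall y, a < y < b -> h y = 0) -> forall y, a <= y <= b -> h y = 0.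
Proof.
move=> ab ch h0 y /andP[ay yb].
have [<-|ay'] := eqVneq a y.
  apply: (@cvg_unique _ _ (h @ a^'+)); [exact: Rhausdorff | exact: cvg_at_right_filter (ch a) |].
  apply: cvg_near_cst; near=> t; apply: h0; apply/andP; split; near: t.
  - exact: nbhs_right_gt.
  - exact: nbhs_right_lt.
have [->|yb'] := eqVneq y b.
  apply: (@cvg_unique _ _ (h @ b^'-)); [exact: Rhausdorff | exact: cvg_at_left_filter (ch b) |].
  apply: cvg_near_cst; near=> t; apply: h0; apply/andP; split; near: t.
  - exact: nbhs_left_gt.
  - exact: nbhs_left_lt.
by apply: h0; rewrite !lt_neqAle ay' yb' ay yb.
Unshelve. all: by end_near.
Qed.

Lemma second_derivative_test_right v v1 v2 (c e : R) :
  (forall z : R, is_derive z 1 v (v1 z)) -> (forall z : R, is_derive z 1 v1 (v2 z)) ->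
  {for c, continuous v2} -> v1 c = 0 -> 0 < v2 c -> 0 < e ->
  exists2 m, 0 < m < e & v c < v (c + m).
Proof.
move=> dv dv1 cv2 v1c v2c e0.
have v2_near : \forall t \near c, 0 < v2 t := cvgr_gt _ cv2 0 v2c.
have [d /= d0 v2_pos] := (nbhs_normP _ _).1 (v2_near _).
pose m := Num.min e d / 2.
have [m0 me md] : [/\ 0 < m, m < e & m < d].
  have : 0 < Num.min e d by rewrite lt_min e0 d0.
  have : Num.min e d <= e by rewrite ge_min lexx.
  have : Num.min e d <= d by rewrite ge_min lexx orbT.
  by rewrite /m; split; lra.
have cv (f f' : R -> R) :
    (forall z : R, is_derive z 1 f (f' z)) -> forall A, {within A, continuous f}.
  by move=> df A; apply: continuous_subspaceT => z; exact: is_derive1_continuous (df z).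
have cm : c < c + m by rewrite ltrDl.
have [xi] := MVT cm (fun x _ => dv x) (cv _ _ dv _).
rewrite in_itv /= => /andP[cxi xim] Exi.
have [eta] := MVT cxi (fun x _ => dv1 x) (cv _ _ dv1 _).
rewrite in_itv /= => /andP[ceta etaxi] Eeta.
have v2eta : 0 < v2 eta by apply: v2_pos; rewrite /= ltr0_norm ?subr_lt0 //; lra.
have v1xi : 0 < v1 xi by move: Eeta; rewrite v1c subr0 => ->; rewrite mulr_gt0 // subr_gt0.
exists m; first by rewrite m0 me.
by rewrite -subr_gt0 Exi mulr_gt0 // addrC addKr.
Qed.

Lemma max_principle v v1 v2 (a b : R) :
  (forall z : R, is_derive z 1 v (v1 z)) -> (forall z : R, is_derive z 1 v1 (v2 z)) ->
  continuous v2 -> (forall z, a < z < b -> 0 < v z -> v1 z = 0 -> 0 < v2 z) ->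
  v a <= 0 -> v b <= 0 -> forall z, a <= z <= b -> v z <= 0.
Proof.
move=> dv dv1 cv2 crit va vb z /andP[az zb]; rewrite leNgt; apply/negP => vz.
have ab : a <= b := le_trans az zb.
have cv : continuous v := fun x => is_derive1_continuous (dv x).
have [c cI cmax] := EVT_max ab (continuous_subspaceT cv).
have vc : 0 < v c by apply: lt_le_trans vz (cmax _ _); rewrite in_itv /= az zb.
move: cI; rewrite in_itv /= => /andP[ac cb].
have ac' : a < c by rewrite lt_neqAle ac andbT; apply/eqP => ec; move: vc; rewrite -ec; lra.
have cb' : c < b by rewrite lt_neqAle cb andbT; apply/eqP => ec; move: vc; rewrite ec; lra.
have v1c : v1 c = 0.
  have [_ <-] := dv c.
  have dvb t : derivable v t 1 by case: (dv t).
  have [] // := @derive1_at_max _ v a b c ab (fun t _ => dvb t).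
  - by rewrite in_itv /= ac' cb'.
  - by move=> t; rewrite in_itv /= => /andP[t_a t_b]; apply: cmax; rewrite in_itv /= !ltW.
have cI : a < c < b by rewrite ac' cb'.
have bc : 0 < b - c by rewrite subr_gt0.
have [m /andP[m0 mb] vcm] :=
  second_derivative_test_right dv dv1 (cv2 c) v1c (crit c cI vc v1c) bc.
have := cmax (c + m); rewrite in_itv /=; lra.
Qed.

End RealIntervals.

Ltac case_I4 i := case: i => [[|[|[|[|?]]]] ?] //.

Section Tables.
Variable R : realFieldType.

(* Substituting this parametrisation lets [field] prove identities that hold
   only modulo cos^2 + sin^2 = 1. *)
Lemma unit_circle_param (s c : R) : s != 0 -> c ^+ 2 + s ^+ 2 = 1 ->
  exists2 t : R, t != 0 & s = 2 * t / (1 + t ^+ 2) /\ c = (1 - t ^+ 2) / (1 + t ^+ 2).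
Proof.
move=> s0 sc; have c1 : 1 + c != 0.
  apply: contra s0 => /eqP c1; rewrite -sqrf_eq0; apply/eqP.
  by move: sc; rewrite (_ : c = -1); [rewrite sqrrN expr1n; lra | lra].
exists (s / (1 + c)); first by rewrite mulf_neq0 ?invr_eq0.
have s2 : s ^+ 2 = 1 - c ^+ 2 by lra.
have e : 1 + (s / (1 + c)) ^+ 2 = 2 / (1 + c).
  by rewrite expr_div_n s2; field.
by rewrite e expr_div_n s2; split; field.
Qed.

Lemma one_plus_sqr_neq0 (t : R) : 1 + t ^+ 2 != 0.
Proof. by rewrite lt0r_neq0 // ltr_pwDl // sqr_ge0. Qed.

Definition kron (a b : nat) : R := (a == b)%:R.

(* In the tables, [s] and [c] stand for sin theta and cos theta, [F], [F1], [F2]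
   for F(r), F'(r), F''(r); indices 0, 1, 2, 3 are theta, phi, psi, r. *)
Definition coframe_tab (s c F : R) (a i : nat) : R :=
  match a, i with
  | 0, 0 => F / 2 | 1, 1 => F / 2 * s | 2, 1 => F / 2 * c | 2, 2 => F / 2 | 3, 3 => 1
  | _, _ => 0 end.

Definition frame_tab (s c F : R) (i a : nat) : R :=
  match i, a with
  | 0, 0 => 2 / F | 1, 1 => 2 / (F * s) | 2, 1 => - (2 * c) / (F * s) | 2, 2 => 2 / F
  | 3, 3 => 1
  | _, _ => 0 end.

Definition metric_tab (c F : R) (j l : nat) : R :=
  match j, l with
  | 0, 0 | 1, 1 | 2, 2 => F ^+ 2 / 4
  | 1, 2 | 2, 1 => F ^+ 2 / 4 * c
  | 3, 3 => 1
  | _, _ => 0 end.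

Definition metric_inv_tab (s c F : R) (j l : nat) : R :=
  match j, l with
  | 0, 0 => 4 / F ^+ 2
  | 1, 1 | 2, 2 => 4 / (F ^+ 2 * s ^+ 2)
  | 1, 2 | 2, 1 => - (4 * c) / (F ^+ 2 * s ^+ 2)
  | 3, 3 => 1
  | _, _ => 0 end.

(* [d] is the coordinate of differentiation; only theta and r occur. *)
Definition dmetric_tab (s c F F1 : R) (d j l : nat) : R :=
  match d, j, l with
  | 0, 1, 2 | 0, 2, 1 => - (F ^+ 2 / 4 * s)
  | 3, 0, 0 | 3, 1, 1 | 3, 2, 2 => F * F1 / 2
  | 3, 1, 2 | 3, 2, 1 => F * F1 / 2 * c
  | _, _, _ => 0 end.

(* Each Christoffel symbol is the product of a function of theta, taken from
   [chr_th], and a function of r, taken from [chr_r]; [chr_th_kind] and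
   [chr_r_kind] say which ones. *)
Definition chr_th (n : nat) (s c : R) : R :=
  match n with
  | 0 => 0 | 1 => 1 | 2 => s / 2 | 3 => c / (2 * s) | 4 => - 1 / (2 * s) | _ => c end.

Definition dchr_th (n : nat) (s c : R) : R :=
  match n with
  | 0 | 1 => 0 | 2 => c / 2 | 3 => - (s ^+ 2 + c ^+ 2) / (2 * s ^+ 2)
  | 4 => c / (2 * s ^+ 2) | _ => - s end.

Definition chr_r (n : nat) (F F1 : R) : R :=
  match n with 0 => 1 | 1 => F1 / F | _ => - (F * F1) / 4 end.

Definition dchr_r (n : nat) (F F1 F2 : R) : R :=
  match n with
  | 0 => 0 | 1 => (F2 * F - F1 ^+ 2) / F ^+ 2 | _ => - (F1 ^+ 2 + F * F2) / 4 end.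

Definition chr_th_kind (k i j : nat) : nat :=
  match k, i, j with
  | 0, 1, 2 | 0, 2, 1 => 2
  | 1, 0, 1 | 1, 1, 0 | 2, 0, 2 | 2, 2, 0 => 3
  | 1, 0, 2 | 1, 2, 0 | 2, 0, 1 | 2, 1, 0 => 4
  | 0, 3, 0 | 0, 0, 3 | 1, 3, 1 | 1, 1, 3 | 2, 3, 2 | 2, 2, 3 => 1
  | 3, 0, 0 | 3, 1, 1 | 3, 2, 2 => 1
  | 3, 1, 2 | 3, 2, 1 => 5
  | _, _, _ => 0 end.

Definition chr_r_kind (k i j : nat) : nat :=
  match k, i, j with
  | 0, 3, 0 | 0, 0, 3 | 1, 3, 1 | 1, 1, 3 | 2, 3, 2 | 2, 2, 3 => 1
  | 3, _, _ => 2
  | _, _, _ => 0 end.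

Definition chr_tab (s c F F1 : R) (k i j : nat) : R :=
  chr_th (chr_th_kind k i j) s c * chr_r (chr_r_kind k i j) F F1.

Definition dchr_tab (s c F F1 F2 : R) (d k i j : nat) : R :=
  match d with
  | 0 => dchr_th (chr_th_kind k i j) s c * chr_r (chr_r_kind k i j) F F1
  | 3 => chr_th (chr_th_kind k i j) s c * dchr_r (chr_r_kind k i j) F F1 F2
  | _ => 0 end.

Definition riemann_up_tab (s c F F1 F2 : R) (m i j l : nat) : R :=
  dchr_tab s c F F1 F2 i m j l - dchr_tab s c F F1 F2 j m i l
  + \sum_(n < 4) (chr_tab s c F F1 m i n * chr_tab s c F F1 n j l
                  - chr_tab s c F F1 m j n * chr_tab s c F F1 n i l).

Definition orbit_curv (F F1 : R) : R := (1 - F1 ^+ 2) / F ^+ 2.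
Definition radial_curv (F F2 : R) : R := - F2 / F.

(* R^m_ijl of dr^2 + F(r)^2 g_(S^3) when its sectional curvature is [kt] on
   planes tangent to the spheres r = const and [kr] on planes containing d_r
   (index 3 is the r direction); [warped_curv g] is the covariant tensor in a
   frame where the metric has components [g]. *)
Definition warped_riemann_up (c F kt kr : R) (m i j l : nat) : R :=
  kt * (kron m i * metric_tab c F j l - kron m j * metric_tab c F i l)
  + (kr - kt) * (kron m i * kron j 3 * kron l 3 + kron m 3 * kron i 3 * metric_tab c F j l
                 - kron m 3 * kron j 3 * metric_tab c F i l - kron m j * kron i 3 * kron l 3).

Definition warped_curv (g : nat -> nat -> R) (kt kr : R) (i j k l : nat) : R :=
  kt * (g i k * g j l - g i l * g j k)
  + (kr - kt) * (g i k * kron j 3 * kron l 3 + kron i 3 * kron k 3 * g j l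
                 - g i l * kron j 3 * kron k 3 - kron i 3 * kron l 3 * g j k).

Lemma metric_tab_inv (s c F : R) (j l : 'I_4) :
  s != 0 -> c ^+ 2 + s ^+ 2 = 1 -> F != 0 ->
  \sum_(m < 4) metric_tab c F j m * metric_inv_tab s c F m l = kron j l.
Proof.
move=> s0 sc F0; have [t t0 [-> ->]] := unit_circle_param s0 sc.
have t2 := one_plus_sqr_neq0 t.
rewrite !big_ord_recr big_ord0 /= add0r.
case_I4 j; case_I4 l; rewrite /metric_tab /metric_inv_tab /kron /=;
  field; rewrite ?t0 ?F0 ?t2 /= ?mulf_neq0 ?expf_neq0 //.
Qed.

Lemma christoffel_tabE (s c F F1 : R) (k i j : 'I_4) :
  s != 0 -> c ^+ 2 + s ^+ 2 = 1 -> F != 0 ->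
  2^-1 * \sum_(l < 4) metric_inv_tab s c F k l *
    (dmetric_tab s c F F1 i j l + dmetric_tab s c F F1 j i l - dmetric_tab s c F F1 l i j)
  = chr_tab s c F F1 k i j.
Proof.
move=> s0 sc F0; have [t t0 [-> ->]] := unit_circle_param s0 sc.
have t2 := one_plus_sqr_neq0 t.
rewrite !big_ord_recr big_ord0 /= add0r.
case_I4 k; case_I4 i; case_I4 j; rewrite /chr_tab /dmetric_tab /metric_inv_tab /=;
  field; rewrite ?t0 ?F0 ?t2 /= ?mulf_neq0 ?expf_neq0 //.
Qed.

Lemma riemann_up_tabE (s c F F1 F2 : R) (m i j l : 'I_4) :
  s != 0 -> c ^+ 2 + s ^+ 2 = 1 -> F != 0 ->
  riemann_up_tab s c F F1 F2 m i j l
  = warped_riemann_up c F (orbit_curv F F1) (radial_curv F F2) m i j l.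
Proof.
move=> s0 sc F0; have [t t0 [-> ->]] := unit_circle_param s0 sc.
have t2 := one_plus_sqr_neq0 t.
rewrite /riemann_up_tab !big_ord_recr big_ord0 /= add0r.
case_I4 m; case_I4 i; case_I4 j; case_I4 l;
  rewrite /warped_riemann_up /dchr_tab /chr_tab /kron /orbit_curv /radial_curv /=;
  field; rewrite ?t0 ?F0 ?t2 /= ?mulf_neq0 ?expf_neq0 //.
Qed.

Lemma warped_riemann_lower (c F kt kr : R) (i j k l : 'I_4) :
  \sum_(m < 4) metric_tab c F k m * warped_riemann_up c F kt kr m i j l
  = warped_curv (metric_tab c F) kt kr i j k l.
Proof.
rewrite !big_ord_recr big_ord0 /= add0r.
case_I4 i; case_I4 j; case_I4 k; case_I4 l;
  rewrite /warped_riemann_up /warped_curv /metric_tab /kron /=; ring.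
Qed.

Lemma coframe_tab_inv (s c F : R) (a i : 'I_4) : s != 0 -> F != 0 ->
  \sum_(m < 4) coframe_tab s c F a m * frame_tab s c F m i = kron a i.
Proof.
move=> s0 F0; rewrite !big_ord_recr big_ord0 /= add0r.
case_I4 a; case_I4 i; rewrite /coframe_tab /frame_tab /kron /=;
  field; rewrite ?s0 ?F0 /= ?mulf_neq0 //.
Qed.

Lemma frame_tab_orthonormal (s c F : R) (a b : 'I_4) :
  s != 0 -> c ^+ 2 + s ^+ 2 = 1 -> F != 0 ->
  \sum_(i < 4) \sum_(k < 4) frame_tab s c F i a * frame_tab s c F k b * metric_tab c F i k
  = kron a b.
Proof.
move=> s0 sc F0; have [t t0 [-> ->]] := unit_circle_param s0 sc.
have t2 := one_plus_sqr_neq0 t.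
rewrite !big_ord_recr !big_ord0 /= !add0r.
case_I4 a; case_I4 b; rewrite /frame_tab /metric_tab /kron /=;
  field; rewrite ?t0 ?F0 ?t2 /= ?mulf_neq0 ?expf_neq0 //.
Qed.

Lemma frame_tab_radial (s c F : R) (a b : 'I_4) :
  \sum_(i < 4) \sum_(k < 4) frame_tab s c F i a * frame_tab s c F k b * (kron i 3 * kron k 3)
  = kron a 3 * kron b 3.
Proof.
rewrite !big_ord_recr !big_ord0 /= /kron /= !(mulr0, mul0r, addr0, add0r, mulr1).
by case_I4 a; case_I4 b.
Qed.

End Tables.

Arguments kron {R}.

Lemma invmx_mulmx1 (R : comUnitRingType) n (A B : 'M[R]_n) :
  A *m B = 1%:M -> invmx A = B.
Proof.
move=> AB; have [uA _] := mulmx1_unit AB.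
by rewrite -[invmx A]mulmx1 -AB mulmxA mulVmx // mul1mx.
Qed.

Lemma derive1_chr_th (R : realType) n (K a : R) : sin a != 0 ->
  derive1 (fun z => chr_th n (sin z) (cos z) * K) a = dchr_th n (sin a) (cos a) * K.
Proof.
move=> s0; have s2 : 2 * sin a != 0 by rewrite mulf_neq0.
by case: n => [|[|[|[|[|n]]]]] /=; derive1_field.
Qed.

Section BianchiCurvature.
Variable R : realType.
Variables F F1 F2 : R -> R.
Context (dF : forall z : R, is_derive z 1 F (F1 z)) (dF1 : forall z : R, is_derive z 1 F1 (F2 z)).
#[local] Existing Instances dF dF1.

Lemma derive1_chr_r n (K a : R) : F a != 0 ->
  derive1 (fun z => K * chr_r n (F z) (F1 z)) a = K * dchr_r n (F a) (F1 a) (F2 a).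
Proof. by move=> F0; case: n => [|[|n]] /=; derive1_field. Qed.

Local Notation Th := (bianchi_coframe F F).
Local Notation th y := (chart_coord y i_theta).
Local Notation rr y := (chart_coord y i_r).

Lemma coframeE y :
  Th y = \matrix_(a < 4, i < 4) coframe_tab (sin (th y)) (cos (th y)) (F (rr y)) a i.
Proof. by apply/matrixP => a i; rewrite !mxE; case_I4 a; case_I4 i. Qed.

Lemma metricE y :
  metric Th y = \matrix_(j < 4, l < 4) metric_tab (cos (th y)) (F (rr y)) j l.
Proof.
apply/matrixP => j l; rewrite /metric coframeE !mxE.
rewrite !big_ord_recr big_ord0 /= add0r !mxE.
case_I4 j; case_I4 l; rewrite /coframe_tab /metric_tab /=; try by field.
transitivity (F (rr y) ^+ 2 / 4 * (cos (th y) ^+ 2 + sin (th y) ^+ 2)); first by field.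
by rewrite cos2Dsin2 mulr1.
Qed.

Lemma pd_metricE (j l i : 'I_4) y :
  pd (fun z => metric Th z j l) i y
  = dmetric_tab (sin (th y)) (cos (th y)) (F (rr y)) (F1 (rr y)) i j l.
Proof.
rewrite (_ : (fun z => _) = fun z => metric_tab (cos (th z)) (F (rr z)) j l); last first.
  by apply: funext => z; rewrite metricE mxE.
rewrite (pd_theta_r (fun a b => metric_tab (cos a) (F b) j l)).
case_I4 i; rewrite /dmetric_tab /=; try done;
  by case_I4 j; case_I4 l; rewrite /metric_tab /=; derive1_field.
Qed.

Lemma metric_invE y : sin (th y) != 0 -> F (rr y) != 0 ->
  metric_inv Th y
  = \matrix_(j < 4, l < 4) metric_inv_tab (sin (th y)) (cos (th y)) (F (rr y)) j l.
Proof.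
move=> s0 F0; rewrite /metric_inv metricE; apply: invmx_mulmx1.
apply/matrixP => j l; rewrite !mxE; under eq_bigr do rewrite !mxE.
exact: metric_tab_inv s0 (cos2Dsin2 _) F0.
Qed.

Lemma christoffelE (k i j : 'I_4) y : sin (th y) != 0 -> F (rr y) != 0 ->
  christoffel Th k i j y
  = chr_tab (sin (th y)) (cos (th y)) (F (rr y)) (F1 (rr y)) k i j.
Proof.
move=> s0 F0; rewrite /christoffel metric_invE //.
under eq_bigr do rewrite !pd_metricE mxE.
exact: christoffel_tabE s0 (cos2Dsin2 _) F0.
Qed.

Lemma near_nondegenerate x : sin (th x) != 0 -> F (rr x) != 0 ->
  \forall y \near x, sin (th y) != 0 /\ F (rr y) != 0.
Proof.
move=> s0 F0.
have sin_th : {for x, continuous (fun y : 'rV[R]_4 => sin (th y))}.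
  apply: (continuous_comp (f := fun y : 'rV[R]_4 => th y)); first exact: coord_continuous.
  exact: continuous_sin.
have F_r : {for x, continuous (fun y : 'rV[R]_4 => F (rr y))}.
  apply: (continuous_comp (f := fun y : 'rV[R]_4 => rr y)); first exact: coord_continuous.
  exact: is_derive1_continuous (dF _).
have n1 := cvgr_neq0 _ sin_th s0; have n2 := cvgr_neq0 _ F_r F0.
by near=> y; split; [near: y; exact: n1 | near: y; exact: n2].
Unshelve. all: by end_near.
Qed.

Lemma pd_christoffelE (k i j d : 'I_4) x : sin (th x) != 0 -> F (rr x) != 0 ->
  pd (christoffel Th k i j) d x
  = dchr_tab (sin (th x)) (cos (th x)) (F (rr x)) (F1 (rr x)) (F2 (rr x)) d k i j.
Proof.
move=> s0 F0.
rewrite (_ : pd _ d x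
  = pd (fun y => chr_tab (sin (th y)) (cos (th y)) (F (rr y)) (F1 (rr y)) k i j) d x).
  rewrite (pd_theta_r (fun a b => chr_tab (sin a) (cos a) (F b) (F1 b) k i j)) /chr_tab.
  case_I4 d; rewrite /dchr_tab /=.
  - exact: derive1_chr_th.
  - exact: derive1_chr_r.
rewrite /pd; apply: near_eq_derive.
by apply: filterS (near_nondegenerate s0 F0) => y [s0' F0']; exact: christoffelE.
Qed.

Lemma riemann_upE (m i j l : 'I_4) x : sin (th x) != 0 -> F (rr x) != 0 ->
  riemann_up Th m i j l x
  = warped_riemann_up (cos (th x)) (F (rr x))
      (orbit_curv (F (rr x)) (F1 (rr x))) (radial_curv (F (rr x)) (F2 (rr x))) m i j l.
Proof.
move=> s0 F0; rewrite /riemann_up !pd_christoffelE //.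
under eq_bigr do rewrite !christoffelE //.
exact: riemann_up_tabE s0 (cos2Dsin2 _) F0.
Qed.

Lemma riemann_downE (i j k l : 'I_4) x : sin (th x) != 0 -> F (rr x) != 0 ->
  riemann_down Th i j k l x
  = warped_curv (metric_tab (cos (th x)) (F (rr x)))
      (orbit_curv (F (rr x)) (F1 (rr x))) (radial_curv (F (rr x)) (F2 (rr x))) i j k l.
Proof.
move=> s0 F0; rewrite /riemann_down metricE.
under eq_bigr do rewrite mxE riemann_upE //.
exact: warped_riemann_lower.
Qed.

Lemma frameE x : sin (th x) != 0 -> F (rr x) != 0 ->
  frame Th x = \matrix_(i < 4, a < 4) frame_tab (sin (th x)) (cos (th x)) (F (rr x)) i a.
Proof.
move=> s0 F0; rewrite /frame coframeE; apply: invmx_mulmx1.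
apply/matrixP => a i; rewrite !mxE; under eq_bigr do rewrite !mxE.
exact: coframe_tab_inv.
Qed.

Lemma riemann_frameE (a b c d : 'I_4) x : sin (th x) != 0 -> F (rr x) != 0 ->
  riemann_frame Th a b c d x
  = warped_curv kron (orbit_curv (F (rr x)) (F1 (rr x))) (radial_curv (F (rr x)) (F2 (rr x)))
      a b c d.
Proof.
move=> s0 F0.
set kt := orbit_curv _ _; set kr := radial_curv _ _.
set E := frame_tab (sin (th x)) (cos (th x)) (F (rr x)).
set G := metric_tab (cos (th x)) (F (rr x)).
pose N (i k : nat) : R := kron i 3 * kron k 3.
have EG (a' b' : 'I_4) : \sum_(i < 4) \sum_(k < 4) E i a' * E k b' * G i k = kron a' b'.
  exact: frame_tab_orthonormal s0 (cos2Dsin2 _) F0.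
have EN (a' b' : 'I_4) : \sum_(i < 4) \sum_(k < 4) E i a' * E k b' * N i k = N a' b'.
  exact: frame_tab_radial.
rewrite (_ : riemann_frame Th a b c d x = sum4 (fun i j k l : 'I_4 =>
     kt * ((E i a * E k c * G i k) * (E j b * E l d * G j l))
   - kt * ((E i a * E l d * G i l) * (E j b * E k c * G j k))
   + (kr - kt) * ((E i a * E k c * G i k) * (E j b * E l d * N j l))
   + (kr - kt) * ((E i a * E k c * N i k) * (E j b * E l d * G j l))
   - (kr - kt) * ((E i a * E l d * G i l) * (E j b * E k c * N j k))
   - (kr - kt) * ((E i a * E l d * N i l) * (E j b * E k c * G j k)))); last first.
  apply: eq_bigr => i _; apply: eq_bigr => j _; apply: eq_bigr => k _; apply: eq_bigr => l _.
  rewrite frameE // !mxE riemann_downE // -/kt -/kr -/E -/G /warped_curv /N; ring.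
rewrite !sum4B !sum4D !sum4N !sum4Z.
rewrite !sum4_mul_ik_jl !sum4_mul_il_jk.
by rewrite !EG !EN /warped_curv /N; ring.
Qed.

End BianchiCurvature.

Definition dsol (R : realType) (c1 c2 r : R) : R := - c1 * sin r + c2 * (r * sin r).
Definition d2sol (R : realType) (c1 c2 r : R) : R :=
  - c1 * cos r + c2 * (sin r + r * cos r).

#[local] Instance is_derive_sol (R : realType) (c1 c2 r : R) :
  is_derive r 1 (sol c1 c2) (dsol c1 c2 r).
Proof. by apply: is_derive_eq; rewrite /GRing.scale /= /dsol; ring. Qed.

#[local] Instance is_derive_dsol (R : realType) (c1 c2 r : R) :
  is_derive r 1 (dsol c1 c2) (d2sol c1 c2 r).
Proof. by apply: is_derive_eq; rewrite /GRing.scale /= /d2sol; ring. Qed.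

Section QuadraticallySmall.
Variable R : realFieldType.
Implicit Types f g h : R -> R.

Definition sq_small f : Prop :=
  exists C delta : R, 0 < delta /\ forall eps, `|eps| < delta -> `|f eps| <= C * eps ^+ 2.

Lemma sq_small_near f g (d : R) : 0 < d -> (forall e, `|e| < d -> f e = g e) ->
  sq_small g -> sq_small f.
Proof.
move=> d0 fg [C [d' [d'0 Hg]]]; exists C, (Num.min d d'); split; first by rewrite lt_min d0.
by move=> e; rewrite lt_min => /andP[ed ed']; rewrite fg // Hg.
Qed.

Lemma sq_smallD f g : sq_small f -> sq_small g -> sq_small (fun e => f e + g e).
Proof.
move=> [C [d [d0 Hf]]] [C' [d' [d'0 Hg]]].
exists (C + C'), (Num.min d d'); split; first by rewrite lt_min d0.
move=> e; rewrite lt_min => /andP[ed ed']; rewrite mulrDl.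
by apply: le_trans (ler_normD _ _) _; apply: lerD; [exact: Hf | exact: Hg].
Qed.

Lemma sq_smallMr f (k : R) : sq_small f -> sq_small (fun e => f e * k).
Proof.
move=> [C [d [d0 Hf]]]; exists (C * `|k|), d; split => // e ed.
by rewrite normrM mulrAC ler_wpM2r // Hf.
Qed.

Lemma sq_small_frac g h (M L d : R) : 0 < d -> 0 < L ->
  (forall e, `|e| < d -> `|g e| <= M /\ L <= h e) ->
  sq_small (fun e => e ^+ 2 * g e / h e).
Proof.
move=> d0 L0 bnd; exists (M / L), d; split => // e /bnd [gM Lh].
have h0 : 0 < h e by apply: lt_le_trans Lh.
rewrite -mulrA normrM normrX real_normK ?num_real // mulrC ler_wpM2r ?sqr_ge0 //.
rewrite normrM normfV (gtr0_norm h0) ler_pM ?invr_ge0 ?(ltW h0) //.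
by rewrite lef_pV2 ?posrE.
Qed.

End QuadraticallySmall.

Lemma sq_small_warped_curv (R : realFieldType) (kt kr : R -> R) (a b c d : nat) :
  sq_small kt -> sq_small kr -> sq_small (fun e => warped_curv kron (kt e) (kr e) a b c d).
Proof.
move=> st sr; rewrite /warped_curv.
set T1 := (_ * _ - _ * _); set T2 := (_ + _ - _ - _).
rewrite (_ : (fun e => _) = fun e => kt e * (T1 - T2) + kr e * T2); last first.
  by apply: funext => e; ring.
by apply: sq_smallD; apply: sq_smallMr.
Qed.

Section PerturbedCurvature.
Variable R : realType.

Lemma perturbation_lower_bound (s p : R) : 0 < s ->
  exists2 d : R, 0 < d & forall eps, `|eps| < d -> `|eps| <= 1 /\ s / 2 <= s + eps * p.
Proof.
move=> s0; exists (Num.min 1 (s / (2 * (`|p| + 1)))).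
  by rewrite lt_min ltr01 divr_gt0 // mulr_gt0 // ltr_wpDl.
move=> eps; rewrite lt_min => /andP[/ltW -> small]; split => //.
move: small; rewrite ltr_pdivlMr ?mulr_gt0 ?ltr_wpDl // => small.
have := ler_norm (- (eps * p)); rewrite normrN normrM.
have := normr_ge0 eps; have := normr_ge0 p; nra.
Qed.

Lemma orbit_curv_sol (c1 c2 eps r : R) : sin r + eps * sol c1 c2 r != 0 ->
  orbit_curv (sin r + eps * sol c1 c2 r) (cos r + eps * dsol c1 c2 r) - (1 - 2 * eps * c2)
  = eps ^+ 2 * (4 * c2 * sin r * sol c1 c2 r - dsol c1 c2 r ^+ 2 - sol c1 c2 r ^+ 2
                + eps * (2 * c2 * sol c1 c2 r ^+ 2)) / (sin r + eps * sol c1 c2 r) ^+ 2.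
Proof.
move=> F0; rewrite /orbit_curv.
have -> : 1 - (cos r + eps * dsol c1 c2 r) ^+ 2
        = cos r ^+ 2 + sin r ^+ 2 - (cos r + eps * dsol c1 c2 r) ^+ 2 by rewrite cos2Dsin2.
by move: F0; rewrite /dsol /sol => F0; field.
Qed.

Lemma radial_curv_sol (c1 c2 eps r : R) : sin r + eps * sol c1 c2 r != 0 ->
  radial_curv (sin r + eps * sol c1 c2 r) (- sin r + eps * d2sol c1 c2 r) - (1 - 2 * eps * c2)
  = eps ^+ 2 * (2 * c2 * sol c1 c2 r) / (sin r + eps * sol c1 c2 r).
Proof. by rewrite /radial_curv /d2sol /sol => F0; field. Qed.

Lemma orbit_curv_sol_sq_small (c1 c2 r : R) : 0 < sin r ->
  sq_small (fun eps => orbit_curv (sin r + eps * sol c1 c2 r) (cos r + eps * dsol c1 c2 r)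
                       - (1 - 2 * eps * c2)).
Proof.
move=> s0; have [d d0 near_r] := perturbation_lower_bound (sol c1 c2 r) s0.
apply: (sq_small_near d0) => [eps /near_r[_ Fr]|].
  by rewrite orbit_curv_sol // gt_eqF // (lt_le_trans _ Fr) // divr_gt0.
pose M := `|4 * c2 * sin r * sol c1 c2 r - dsol c1 c2 r ^+ 2 - sol c1 c2 r ^+ 2|
          + `|2 * c2 * sol c1 c2 r ^+ 2|.
apply: (sq_small_frac (M := M) d0 (_ : 0 < (sin r / 2) ^+ 2)) => [|eps /near_r[eps1 Fr]].
  by rewrite exprn_gt0 // divr_gt0.
split; last by rewrite !expr2 ler_pM // divr_ge0 // ltW.
apply: le_trans (ler_normD _ _) _; rewrite lerD2l normrM.
by rewrite -[X in _ <= X]mul1r ler_wpM2r.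
Qed.

Lemma radial_curv_sol_sq_small (c1 c2 r : R) : 0 < sin r ->
  sq_small (fun eps => radial_curv (sin r + eps * sol c1 c2 r) (- sin r + eps * d2sol c1 c2 r)
                       - (1 - 2 * eps * c2)).
Proof.
move=> s0; have [d d0 near_r] := perturbation_lower_bound (sol c1 c2 r) s0.
apply: (sq_small_near d0) => [eps /near_r[_ Fr]|].
  by rewrite radial_curv_sol // gt_eqF // (lt_le_trans _ Fr) // divr_gt0.
apply: (sq_small_frac d0 (_ : 0 < sin r / 2)) => [|eps /near_r[_ Fr]] //.
by rewrite divr_gt0.
Qed.

End PerturbedCurvature.

Lemma perturbed_sphere_curvature (R : realType) (c1 c2 : R) (x : 'rV[R]_4) :
  0 < chart_coord x i_theta < pi -> 0 < chart_coord x i_r < pi ->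
  forall a b c d : 'I_4,
    sq_small (fun eps =>
      riemann_frame
        (bianchi_coframe (fun r => sin r + eps * sol c1 c2 r)
                         (fun r => sin r + eps * sol c1 c2 r)) a b c d x
      - (1 - 2 * eps * c2) *
        (((a == c)%:R * (b == d)%:R) - ((a == d)%:R * (b == c)%:R))).
Proof.
move=> thI rI a b c d; set r := chart_coord x i_r in rI *.
have sth : sin (chart_coord x i_theta) != 0 by rewrite gt_eqF // sin_gt0_pi.
have s0 : 0 < sin r by rewrite sin_gt0_pi.
have [d0 d0_gt0 near_r] := perturbation_lower_bound (sol c1 c2 r) s0.
apply: (sq_small_near d0_gt0 (g := fun eps => warped_curv kron
   (orbit_curv (sin r + eps * sol c1 c2 r) (cos r + eps * dsol c1 c2 r) - (1 - 2 * eps * c2))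
   (radial_curv (sin r + eps * sol c1 c2 r) (- sin r + eps * d2sol c1 c2 r)
    - (1 - 2 * eps * c2)) a b c d)) => [eps /near_r[_ Fr]|]; last first.
  exact: sq_small_warped_curv (orbit_curv_sol_sq_small c1 c2 s0)
                              (radial_curv_sol_sq_small c1 c2 s0).
have F0 : sin r + eps * sol c1 c2 r != 0 by rewrite gt_eqF // (lt_le_trans _ Fr) // divr_gt0.
have dF (z : R) : is_derive z 1 (fun r => sin r + eps * sol c1 c2 r) (cos z + eps * dsol c1 c2 z).
  by apply: is_derive_eq; rewrite /GRing.scale /=; ring.
have dF1 (z : R) :
    is_derive z 1 (fun r => cos r + eps * dsol c1 c2 r) (- sin z + eps * d2sol c1 c2 z).
  by apply: is_derive_eq; rewrite /GRing.scale /=; ring.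
by rewrite (riemann_frameE dF dF1) // /warped_curv /kron; ring.
Qed.

Lemma linearized_system_sol (R : realType) (p q : R -> R) (c1 c2 : R) :
  (forall r, 0 <= r <= pi -> p r = sol c1 c2 r /\ q r = sol c1 c2 r) ->
  forall r, 0 < r < pi -> linearized_system p q r.
Proof.
move=> pq r rI.
have inI (y : R) : 0 < y < pi -> 0 <= y <= pi by case/andP => *; rewrite !ltW.
have d1 (f : R -> R) : (forall y, 0 <= y <= pi -> f y = sol c1 c2 y) ->
    forall y, 0 < y < pi -> derive1 f y = dsol c1 c2 y.
  move=> fE y yI; rewrite (derive1_eq_itvoo yI (fun t tI => fE t (inI t tI))).
  by rewrite derive1E derive_val.
have d2 (f : R -> R) : (forall y, 0 <= y <= pi -> f y = sol c1 c2 y) ->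
    derive1n 2 f r = d2sol c1 c2 r.
  move=> fE; rewrite /= (derive1_eq_itvoo rI (d1 f fE)).
  by rewrite derive1E derive_val.
have s0 : sin r != 0 by rewrite gt_eqF // sin_gt0_pi.
have [pE qE] : (forall y, 0 <= y <= pi -> p y = sol c1 c2 y)
            /\ (forall y, 0 <= y <= pi -> q y = sol c1 c2 y).
  by split=> y /pq [].
rewrite /linearized_system !d2 // !d1 // pE ?qE ?inI // /cot /sol /dsol /d2sol.
by split; field.
Qed.

Lemma linearized_system_diff (R : realType) (p q : R -> R) (r : R) :
  sin r != 0 -> linearized_system p q r ->
  sin r ^+ 2 * (derive1n 2 p r - derive1n 2 q r) + sin r * cos r * (derive1 p r - derive1 q r)
  + (2 * sin r ^+ 2 - 9) * (p r - q r) = 0.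
Proof.
move=> s0 [e1 e2].
have -> : derive1n 2 p r
  = (derive1 p r + derive1 q r) * cot r + 3 / sin r ^+ 2 * (p r - q r) + q r.
  by rewrite -e1; ring.
have -> : derive1n 2 q r
  = 2 * derive1 p r * cot r - 6 / sin r ^+ 2 * (p r - q r) - q r + 2 * p r.
  by rewrite -e2; ring.
by rewrite /cot; field.
Qed.

Lemma linearized_system_reduced (R : realType) (p q : R -> R) (r : R) :
  p r = q r -> derive1 p r = derive1 q r -> linearized_system p q r ->
  derive1n 2 p r = p r + 2 * derive1 p r * cot r.
Proof.
move=> pq dpq [e1 _]; rewrite -pq -dpq subrr mulr0 addr0 in e1.
by rewrite -[LHS](subrK (p r)) e1; ring.
Qed.

Lemma linearized_diff_max_principle (R : realType) (v v1 v2 : R -> R) :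
  (forall z : R, is_derive z 1 v (v1 z)) -> (forall z : R, is_derive z 1 v1 (v2 z)) ->
  continuous v2 ->
  (forall z, 0 < z < pi ->
     sin z ^+ 2 * v2 z + sin z * cos z * v1 z + (2 * sin z ^+ 2 - 9) * v z = 0) ->
  v 0 = 0 -> v pi = 0 -> forall z, 0 <= z <= pi -> v z <= 0.
Proof.
move=> dv dv1 cv2 eq_v v0 vpi; apply: max_principle dv dv1 cv2 _ _ _; rewrite ?v0 ?vpi //.
move=> z zI vz v1z; have s0 : 0 < sin z := sin_gt0_pi zI.
(* at such a point the equation reads sin^2 v'' = (9 - 2 sin^2) v > 0 *)
have := eq_v z zI; rewrite v1z mulr0 addr0 => E.
rewrite ltNge; apply/negP => v2z.
have : sin z ^+ 2 * v2 z <= 0 by rewrite mulr_ge0_le0 // sqr_ge0.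
have : (2 * sin z ^+ 2 - 9) * v z < 0.
  by rewrite pmulr_llt0 // subr_lt0; have := sin_le1 z; nra.
lra.
Qed.

(* Cramer's rule for f in the basis (cos, sin - r cos) of solutions of
   f'' = f + 2 f' cot r, whose Wronskian is sin^2 r. *)
Definition sol_coef1 (R : realType) (f : R -> R) (r : R) : R :=
  (f r * (r * sin r) - derive1 f r * (sin r - r * cos r)) / sin r ^+ 2.
Definition sol_coef2 (R : realType) (f : R -> R) (r : R) : R :=
  (cos r * derive1 f r + sin r * f r) / sin r ^+ 2.

Lemma sol_coefE (R : realType) (f : R -> R) (r : R) : sin r != 0 ->
  f r = sol (sol_coef1 f r) (sol_coef2 f r) r.
Proof. by move=> s0; rewrite /sol_coef1 /sol_coef2 /sol; field. Qed.

Section SmoothSolutions.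
Variable R : realType.
Variables p q : R -> R.
Hypotheses (sp : smooth p) (sq : smooth q).

#[local] Instance is_derive_p (z : R) : is_derive z 1 p (derive1 p z) := smooth_is_derive 0 z sp.
#[local] Instance is_derive_dp (z : R) : is_derive z 1 (derive1 p) (derive1n 2 p z) :=
  smooth_is_derive 1 z sp.
#[local] Instance is_derive_d2p (z : R) : is_derive z 1 (derive1n 2 p) (derive1n 3 p z) :=
  smooth_is_derive 2 z sp.
#[local] Instance is_derive_q (z : R) : is_derive z 1 q (derive1 q z) := smooth_is_derive 0 z sq.
#[local] Instance is_derive_dq (z : R) : is_derive z 1 (derive1 q) (derive1n 2 q z) :=
  smooth_is_derive 1 z sq.
#[local] Instance is_derive_d2q (z : R) : is_derive z 1 (derive1n 2 q) (derive1n 3 q z) :=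
  smooth_is_derive 2 z sq.

Lemma linearized_system_p_eq_q :
  (forall r, 0 < r < pi -> linearized_system p q r) -> forall r, 0 <= r <= pi -> p r = q r.
Proof.
move=> sys.
pose u0 z := p z - q z; pose u1 z := derive1 p z - derive1 q z.
pose u2 z := derive1n 2 p z - derive1n 2 q z.
pose h z := sin z ^+ 2 * u2 z + sin z * cos z * u1 z + (2 * sin z ^+ 2 - 9) * u0 z.
have h0 : forall z, 0 <= z <= pi -> h z = 0.
  apply: itvcc_zero_of_itvoo (pi_gt0 R) _ _.
    by move=> z; apply: is_derive1_continuous.
  by move=> z zI; apply: linearized_system_diff (sys z zI); rewrite gt_eqF // sin_gt0_pi.
have u0_end z : 0 <= z <= pi -> sin z = 0 -> u0 z = 0.
  by move=> /h0; rewrite /h => + s0; rewrite s0; lra.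
have u0_0 : u0 0 = 0 by rewrite u0_end ?sin0 // lexx pi_ge0.
have u0_pi : u0 pi = 0 by rewrite u0_end ?sinpi // lexx pi_ge0.
have eq_u z : 0 < z < pi -> h z = 0 by move=> zI; apply: h0; case/andP: zI => *; rewrite !ltW.
have le_u : forall z, 0 <= z <= pi -> u0 z <= 0.
  apply: (@linearized_diff_max_principle _ u0 u1 u2) => //.
  by move=> z; apply: is_derive1_continuous.
have ge_u : forall z, 0 <= z <= pi -> - u0 z <= 0.
  apply: (@linearized_diff_max_principle _ (fun z => - u0 z) (fun z => - u1 z) (fun z => - u2 z)).
  - by move=> z; apply: is_derive1_continuous.
  - by move=> z /eq_u; rewrite /h; lra.
  - by rewrite u0_0 oppr0.
  - by rewrite u0_pi oppr0.
by move=> r rI; have := le_u r rI; have := ge_u r rI; rewrite /u0; lra.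
Qed.

Lemma sol_coef_is_derive0 (r : R) : sin r != 0 ->
  derive1 (derive1 p) r = p r + 2 * derive1 p r * cot r ->
  is_derive r 1 (sol_coef1 p) 0 /\ is_derive r 1 (sol_coef2 p) 0.
Proof.
move=> s0 p2E; have s2 : sin r ^+ 2 != 0 by rewrite expf_neq0.
by split; apply: is_derive_eq; rewrite /GRing.scale /= p2E /cot; field.
Qed.

Lemma linearized_system_is_sol : (forall r, 0 < r < pi -> linearized_system p q r) ->
  exists c1 c2 : R, forall r, 0 <= r <= pi -> p r = sol c1 c2 r /\ q r = sol c1 c2 r.
Proof.
move=> sys; have pq := linearized_system_p_eq_q sys.
have inI (y : R) : 0 < y < pi -> 0 <= y <= pi by case/andP => *; rewrite !ltW.
have s0 (r : R) : 0 < r < pi -> sin r != 0 by move=> rI; rewrite gt_eqF // sin_gt0_pi.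
have d0 r : 0 < r < pi -> is_derive r 1 (sol_coef1 p) 0 /\ is_derive r 1 (sol_coef2 p) 0.
  move=> rI; apply: sol_coef_is_derive0 (s0 r rI) _.
  apply: linearized_system_reduced (sys r rI); first exact: pq (inI r rI).
  by apply: derive1_eq_itvoo rI _ => y /inI /pq.
have pi0 := pi_gt0 R.
have mid : 0 < (pi : R) / 2 < pi by apply/andP; split; lra.
set c1 := sol_coef1 p (pi / 2); set c2 := sol_coef2 p (pi / 2).
have psol r : 0 < r < pi -> p r = sol c1 c2 r.
  move=> rI; rewrite (sol_coefE p (s0 r rI)).
  rewrite (is_derive0_itvoo_const (fun z zI => (d0 z zI).1) rI mid).
  by rewrite (is_derive0_itvoo_const (fun z zI => (d0 z zI).2) rI mid).
have pE r : 0 <= r <= pi -> p r = sol c1 c2 r.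
  move=> rI; apply/eqP; rewrite -subr_eq0; apply/eqP; move: r rI.
  apply: itvcc_zero_of_itvoo (pi_gt0 R) _ _ => [z | z zI].
    exact: is_derive1_continuous.
  by rewrite psol ?subrr.
by exists c1, c2 => r rI; rewrite -pq // pE.
Qed.

End SmoothSolutions.

Theorem mainTheorem2 (R : realType) :
  (forall p q : R -> R, smooth p -> smooth q ->
     ((forall r : R, 0 < r < pi -> linearized_system p q r) <->
      (exists c1 c2 : R, forall r : R, 0 <= r <= pi ->
          p r = sol c1 c2 r /\ q r = sol c1 c2 r)))
  /\
  (forall (c1 c2 : R) (x : 'rV[R]_4),
     0 < chart_coord x i_theta < pi -> 0 < chart_coord x i_r < pi ->
     forall a b c d : 'I_4,
       exists C delta : R, 0 < delta /\
         forall eps : R, `|eps| < delta ->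
           `| riemann_frame
                (bianchi_coframe (fun r => sin r + eps * sol c1 c2 r)
                                 (fun r => sin r + eps * sol c1 c2 r))
                a b c d x
              - (1 - 2 * eps * c2) *
                (((a == c)%:R * (b == d)%:R) - ((a == d)%:R * (b == c)%:R)) |
           <= C * eps ^+ 2).
Proof.
split=> [p q sp sq | c1 c2 x thI rI a b c d].
  split; first exact: linearized_system_is_sol.
  by case=> c1 [c2]; exact: linearized_system_sol.
exact: perturbed_sphere_curvature.
Qed.
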